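(* Let $C$ be an $(n,k)$-code (not necessarily MDS) with generator matrix $G$ ($k\times n$) and parity-check matrix $H$ ($(n-k)\times n$). For any $A_1,\dots,A_\ell\subseteq[n]$, $\dim(H_{A_1}\cap\dots\cap H_{A_\ell})=n-k+\sum_{i=1}^\ell\operatorname{rank}(G|_{\bar A_i})-\operatorname{rank}\mathcal H_{A_1,\dots,A_\ell}[G]$.
   Context: For a matrix $V$ with columns indexed by $[n]$ and $A\subseteq[n]$, $V|_A$ is the submatrix of columns in $A$, $V_A$ is their span, and $\bar A=[n]\setminus A$. $\mathcal H_{A_1,\dots,A_\ell}[G]$ is the $(n+\ell k)\times\sum_i|\bar A_i|$ block matrix whose first block row is $(I_n|_{\bar A_1},\dots,I_n|_{\bar A_\ell})$ and below which is the block-diagonal matrix $\operatorname{diag}(G|_{\bar A_1},\dots,G|_{\bar A_\ell})$. *)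

From HB Require Import structures.
From mathcomp Require Import all_boot all_order all_algebra.
Set Implicit Arguments. Unset Strict Implicit. Unset Printing Implicit Defensive.
Import GRing.Theory.
Local Open Scope ring_scope.

Definition colrestr (F : fieldType) (m n : nat) (V : 'M[F]_(m, n))
    (A : {set 'I_n}) : 'M[F]_(m, #|A|) :=
  colsub (fun j : 'I_#|A| => enum_val j) V.

(* V_A : span of the columns of V in A, represented (mathcomp convention:
   spaces are row spaces) by the matrix whose rows are those columns. *)
Definition colspan (F : fieldType) (m n : nat) (V : 'M[F]_(m, n))
    (A : {set 'I_n}) : 'M[F]_(#|A|, m) := (colrestr V A)^T.

Definition Hmat (F : fieldType) (k n l : nat) (G : 'M[F]_(k, n))
    (A : 'I_l -> {set 'I_n}) :
    'M[F]_(n + \sum_(i < l) k, \sum_(j < l) #|~: A j|) :=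
  col_mx
    (\mxrow_(j < l) colrestr (1%:M : 'M[F]_n) (~: A j))
    (\mxblock_(i < l, j < l)
       (if i == j then colrestr G (~: A j) else 0 : 'M[F]_(k, #|~: A j|))).

From HB Require Import structures.
From mathcomp Require Import all_boot all_order all_algebra zify.
Import GRing.Theory.
Local Open Scope ring_scope.

Set Implicit Arguments. Unset Strict Implicit. Unset Printing Implicit Defensive.

(* A vector x = (x_1, ..., x_l) lies in the right kernel of H_{A_1..A_l}[G]
   iff each x_i lies in the kernel of G|_{~A_i} and the extensions by zero of
   the x_i sum to 0.  Counting dimensions, rank H_{A_1..A_l}[G] is the sum of
   the rank G|_{~A_i} plus dim (S_1 + ... + S_l), where S_i, the extension by
   zero of ker G|_{~A_i}, is the space of dual codewords vanishing on A_i.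
   Since the rows of H span the dual code, S_i is the image under H of the
   orthogonal complement of H_{A_i}; orthogonal complements turn
   intersections into sums and H is injective, hence
   dim (S_1 + ... + S_l) = n - k - dim (H_{A_1} /\ ... /\ H_{A_l}). *)

Lemma mxrank_castmx (F : fieldType) m1 m2 n1 n2 (e : (m1 = m2) * (n1 = n2))
    (A : 'M[F]_(m1, n1)) :
  \rank (castmx e A) = \rank A.
Proof. by case: e => e1 e2; subst; rewrite castmx_id. Qed.

Section BlockDiagonal.

Variables (F : fieldType) (l : nat) (p_ q_ : 'I_l -> nat).
Variable B_ : forall i j, 'M[F]_(p_ i, q_ j).
Hypothesis B_offdiag : forall i j, i != j -> B_ i j = 0.

Lemma rank_mxblock_diag :
  \rank (\mxblock_(i, j) B_ i j) = (\sum_i \rank (B_ i i))%N.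
Proof.
elim: l p_ q_ B_ B_offdiag => [|l' IH] p q B B0.
  by move: (\mxblock_(i, j) _); rewrite !big_ord0 => M; rewrite flatmx0 mxrank0.
rewrite mxblock_recul mxrank_castmx big_ord_recl /=.
have -> : \mxrow_j B ord0 (lift ord0 j) = 0.
  by rewrite -mxrow0; apply: eq_mxrow => j; apply: B0; rewrite neq_lift.
have -> : \mxcol_i B (lift ord0 i) ord0 = 0.
  by rewrite -mxcol0; apply: eq_mxcol => i; apply: B0; rewrite eq_sym neq_lift.
rewrite rank_diag_block_mx IH // => i j ij.
by apply: B0; rewrite (inj_eq lift_inj).
Qed.

Lemma kermx_mxblock_diag :
  (kermx (\mxblock_(i, j) B_ i j) :=: \mxdiag_i kermx (B_ i i))%MS.
Proof.
have sub : (\mxdiag_i kermx (B_ i i) <= kermx (\mxblock_(i, j) B_ i j))%MS.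
  apply/sub_kermxP; rewrite mul_mxdiag_mxblock -[RHS]mxblock0.
  apply: eq_mxblock => i j.
  by have [<-|/B_offdiag->] := eqVneq i j; rewrite ?mulmx_ker ?mulmx0.
apply/eqmx_sym/eqmxP; rewrite -(mxrank_leqif_eq sub) rank_mxdiag.
rewrite mxrank_ker rank_mxblock_diag; under eq_bigr do rewrite mxrank_ker.
have sumK :
    (\sum_i (p_ i - \rank (B_ i i)) + \sum_i \rank (B_ i i) = \sum_i p_ i)%N.
  by rewrite -big_split; apply: eq_bigr => i _ /=; rewrite subnK ?rank_leq_row.
by apply/eqP; lia.
Qed.

End BlockDiagonal.

Section Kernels.

Variable F : fieldType.

Lemma kermx_row_mx m n1 n2 (X : 'M[F]_(m, n1)) (Y : 'M[F]_(m, n2)) :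
  (kermx (row_mx X Y) :=: kermx X :&: kermx Y)%MS.
Proof.
have subK p (Z : 'M_(p, m)) :
    (Z <= kermx (row_mx X Y))%MS = (Z <= kermx X)%MS && (Z <= kermx Y)%MS.
  by rewrite !sub_kermx mul_mx_row row_mx_eq0.
by apply/eqmxP; rewrite sub_capmx -subK submx_refl subK capmxSl capmxSr.
Qed.

Lemma mxrank_row_mx_ker m n1 n2 (X : 'M[F]_(m, n1)) (Y : 'M[F]_(m, n2)) :
  \rank (row_mx X Y) = (\rank Y + \rank (kermx Y *m X))%N.
Proof.
have := mxrank_mul_ker (kermx Y) X.
rewrite capmxC -(kermx_row_mx X Y) !mxrank_ker.
by have := rank_leq_row Y; have := rank_leq_row (row_mx X Y); lia.
Qed.

Lemma mulmx_kermxM m n p (A : 'M[F]_(m, n)) (B : 'M[F]_(n, p)) :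
  (kermx (A *m B) *m A :=: A :&: kermx B)%MS.
Proof.
apply/eqmxP/andP; split.
  by rewrite sub_capmx submxMl sub_kermx -mulmxA mulmx_ker eqxx.
have sCA : (A :&: kermx B <= A)%MS := capmxSl _ _.
rewrite -(mulmxKpV sCA) submxMr // sub_kermx mulmxA mulmxKpV //.
by apply/eqP/sub_kermxP/capmxSr.
Qed.

End Kernels.

(* For the standard bilinear form, kermx X^T represents the orthogonal
   complement of the row space of X. *)
Section Orthogonal.

Variables (F : fieldType) (m : nat).

Lemma kermx_trS p q (X : 'M[F]_(p, m)) (Y : 'M[F]_(q, m)) :
  (Y <= X)%MS -> (kermx X^T <= kermx Y^T)%MS.
Proof.
by case/submxP => D ->; rewrite sub_kermx trmx_mul mulmxA mulmx_ker mul0mx.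
Qed.

Lemma kermx_tr_eqmx p q (X : 'M[F]_(p, m)) (Y : 'M[F]_(q, m)) :
  (X :=: Y)%MS -> (kermx X^T :=: kermx Y^T)%MS.
Proof. by move=> eqXY; apply/eqmxP; rewrite !kermx_trS ?eqXY. Qed.

Lemma kermx_trK p (X : 'M[F]_(p, m)) : (kermx (kermx X^T)^T :=: X)%MS.
Proof.
have sX : (X <= kermx (kermx X^T)^T)%MS.
  by rewrite sub_kermx -[X *m _]trmxK trmx_mul trmxK mulmx_ker trmx0.
apply/eqmx_sym/eqmxP; rewrite -(mxrank_leqif_eq sX).
rewrite mxrank_ker mxrank_tr mxrank_ker mxrank_tr.
by apply/eqP; have := rank_leq_col X; lia.
Qed.

Lemma kermx_tr_adds p q (X : 'M[F]_(p, m)) (Y : 'M[F]_(q, m)) :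
  (kermx (X + Y)%MS^T :=: kermx X^T :&: kermx Y^T)%MS.
Proof.
apply: eqmx_trans (kermx_tr_eqmx (addsmxE X Y)) _.
by rewrite tr_col_mx; apply: kermx_row_mx.
Qed.

Lemma kermx_tr_cap p q (X : 'M[F]_(p, m)) (Y : 'M[F]_(q, m)) :
  (kermx (X :&: Y)%MS^T :=: kermx X^T + kermx Y^T)%MS.
Proof.
have eqXY := cap_eqmx (eqmx_sym (kermx_trK X)) (eqmx_sym (kermx_trK Y)).
apply: eqmx_trans (kermx_tr_eqmx eqXY) _.
apply: eqmx_trans (kermx_tr_eqmx (eqmx_sym (kermx_tr_adds _ _))) _.
exact: kermx_trK.
Qed.

Lemma kermx_tr_bigcap l (p_ : 'I_l -> nat) (X_ : forall i, 'M[F]_(p_ i, m)) :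
  (kermx (\bigcap_(i < l) <<X_ i>>)%MS^T :=: \sum_(i < l) kermx (X_ i)^T)%MS.
Proof.
elim: l p_ X_ => [|l IH] p_ X_.
  rewrite !big_ord0 trmx1; apply/eqmxP; rewrite sub0mx andbT.
  by rewrite submx0 kermx_eq0 row_free_unit unitmx1.
rewrite !big_ord_recl; apply: eqmx_trans (kermx_tr_cap _ _) _.
exact: adds_eqmx (kermx_tr_eqmx (genmxE _)) (IH _ _).
Qed.

End Orthogonal.

Section ColumnRestriction.

Variables (F : fieldType) (n : nat).
Implicit Types A : {set 'I_n}.
Local Notation I := (1%:M : 'M[F]_n).

Lemma colrestrE m (M : 'M[F]_(m, n)) A : colrestr M A = M *m colrestr I A.
Proof. by rewrite /colrestr mulmx_colsub mulmx1. Qed.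

Lemma tr_colrestr1C_mul A : (colrestr I (~: A))^T *m colrestr I A = 0.
Proof.
rewrite /colrestr trmx_mxsub trmx1 -mxsub_mul mulmx1; apply/matrixP => i j.
rewrite !mxE; have := enum_valP i; rewrite in_setC.
by case: eqP => // ->; rewrite enum_valP.
Qed.

Lemma colrestr1_mul_trE A x y :
  (colrestr I A *m (colrestr I A)^T) x y = ((x \in A) && (x == y))%:R.
Proof.
rewrite mxE; under eq_bigr do rewrite !mxE.
rewrite -(big_enum_val (fun z => (x == z)%:R * (y == z)%:R)) /=.
have [xA|xNA] := boolP (x \in A); last first.
  rewrite big1 // => z zA; rewrite (_ : x == z = false) ?mul0r //.
  by apply: contraNF xNA => /eqP->.
rewrite (bigD1 x) //= eqxx mul1r big1 ?addr0 ?[y == x]eq_sym //.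
move=> z /andP[_ /negPf].
by rewrite eq_sym => ->; rewrite mul0r.
Qed.

Lemma colrestr1_mul_tr_addC A :
  colrestr I A *m (colrestr I A)^T
    + colrestr I (~: A) *m (colrestr I (~: A))^T = I.
Proof.
apply/matrixP => x y; rewrite [LHS]mxE !colrestr1_mul_trE in_setC mxE.
by case: (x \in A); case: (x == y); rewrite ?addr0 ?add0r.
Qed.

Lemma colrestr1C_eqmx_kermx A :
  ((colrestr I (~: A))^T :=: kermx (colrestr I A))%MS.
Proof.
apply/eqmxP/andP; split; first exact/sub_kermxP/tr_colrestr1C_mul.
set K := kermx _; rewrite -[K]mulmx1 -[X in K *m X](colrestr1_mul_tr_addC A).
by rewrite mulmxDr !mulmxA mulmx_ker mul0mx add0r submxMl.
Qed.

Definition shortened_dual k (G : 'M[F]_(k, n)) A : 'M[F]_(#|~: A|, n) :=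
  kermx (colrestr G (~: A))^T *m (colrestr I (~: A))^T.

Lemma shortened_dualE k (G : 'M[F]_(k, n)) A :
  (shortened_dual G A :=: kermx G^T :&: kermx (colrestr I A))%MS.
Proof.
rewrite /shortened_dual [colrestr G _]colrestrE trmx_mul capmxC.
apply: eqmx_trans (mulmx_kermxM _ _) _.
exact: cap_eqmx (colrestr1C_eqmx_kermx A) (eqmx_refl _).
Qed.

Lemma shortened_dual_parity k m (G : 'M[F]_(k, n)) (H : 'M[F]_(m, n)) A :
    (H :=: kermx G^T)%MS ->
  (shortened_dual G A :=: kermx (colspan H A)^T *m H)%MS.
Proof.
move=> dualH; apply: eqmx_trans (shortened_dualE G A) _.
rewrite /colspan trmxK [colrestr H _]colrestrE.
apply: eqmx_sym; apply: eqmx_trans (mulmx_kermxM _ _) _.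
exact: cap_eqmx dualH (eqmx_refl _).
Qed.

Lemma mxrank_sum_shortened_dual k m l (G : 'M[F]_(k, n)) (H : 'M[F]_(m, n))
    (A : 'I_l -> {set 'I_n}) :
    (H :=: kermx G^T)%MS -> row_free H ->
  (\rank (\sum_(i < l) <<shortened_dual G (A i)>>)
     + \rank (\bigcap_(i < l) <<colspan H (A i)>>))%N = m.
Proof.
move=> dualH freeH.
have eqsum : (\sum_(i < l) <<shortened_dual G (A i)>>
              :=: (\sum_(i < l) kermx (colspan H (A i))^T)%MS *m H)%MS.
  apply: eqmx_trans _ (eqmx_sym (sumsmxMr_gen _ _ _)).
  apply: eqmx_sums => i _.
  by rewrite (eq_genmx (shortened_dual_parity _ dualH)).
rewrite eqsum mxrankMfree // -kermx_tr_bigcap mxrank_ker mxrank_tr.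
by have := rank_leq_col (\bigcap_(i < l) <<colspan H (A i)>>)%MS; lia.
Qed.

Lemma mxrank_Hmat k l (G : 'M[F]_(k, n)) (A : 'I_l -> {set 'I_n}) :
  \rank (Hmat G A) = (\sum_(i < l) \rank (colrestr G (~: A i))
                      + \rank (\sum_(i < l) <<shortened_dual G (A i)>>))%N.
Proof.
rewrite -mxrank_tr /Hmat tr_col_mx mxrank_row_mx_ker tr_mxrow tr_mxblock.
have offdiag (i j : 'I_l) : i != j ->
    (if j == i then colrestr G (~: A i) else 0 : 'M_(k, #|~: A i|))^T = 0.
  by rewrite eq_sym => /negPf->; rewrite trmx0.
rewrite rank_mxblock_diag // (eqmxMr _ (kermx_mxblock_diag offdiag)).
rewrite mul_mxdiag_mxcol eqmx_col; congr (_ + _).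
  by apply: eq_bigr => i _; rewrite eqxx mxrank_tr.
by under eq_bigr do rewrite eqxx.
Qed.

End ColumnRestriction.

Unset Implicit Arguments. Set Strict Implicit.

Theorem lemma2p3 (F : fieldType) (n k l : nat) (hkn : (k <= n)%N)
    (G : 'M[F]_(k, n)) (H : 'M[F]_(n - k, n))
    (hG : \rank G = k) (hH : \rank H = (n - k)%N) (hGH : G *m H^T = 0)
    (A : 'I_l -> {set 'I_n}) :
  ((\rank (\bigcap_(i < l) <<colspan H (A i)>>)%MS)%:Z : int)
  = ((n - k)%N)%:Z + (\sum_(i < l) \rank (colrestr G (~: A i)))%N%:Z
      - (\rank (Hmat G A))%:Z.
Proof.
have sHK : (H <= kermx G^T)%MS.
  by rewrite sub_kermx -[H *m _]trmxK trmx_mul trmxK hGH trmx0.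
have dualH : (H :=: kermx G^T)%MS.
  apply/eqmxP; rewrite sHK -(mxrank_leqif_sup sHK).2.
  by rewrite mxrank_ker mxrank_tr hG hH eqxx.
have freeH : row_free H by rewrite /row_free hH.
have := mxrank_sum_shortened_dual A dualH freeH.
rewrite mxrank_Hmat; lia.
Qed.
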